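(* Let $G_m$ be a parametric regulatory network, $R$ a well-formed set of influence constraints, and $T\subseteq\Delta(G_m)$ such that $p_R(T)\neq\emptyset$; let $L,U$ be the componentwise minimum and maximum of $p_R(T)$. For $v\in V$, $\omega\in\Omega_v$ and $\mathcal O\subseteq\Omega_v\times D_v$ define $l_{v,\omega}(\mathcal O)=\max(\{k\mid(\omega',k)\in\mathcal O,\ \omega'\prec_v\omega\}\cup\{L_{v,\omega}\})$ and $u_{v,\omega}(\mathcal O)=\min(\{k\mid(\omega',k)\in\mathcal O,\ \omega'\succ_v\omega\}\cup\{U_{v,\omega}\})$. Then for every $v\in V$, every pair of distinct $\omega,\omega'\in\Omega_v$, every $y\in\{L_{v,\omega},\dots,U_{v,\omega}\}$ and every $z\in\{l_{v,\omega'}(\{(\omega,y)\}),\dots,u_{v,\omega'}(\{(\omega,y)\})\}$: if there exists $\omega''\in\Omega_v\setminus\{\omega,\omega'\}$ with $l_{v,\omega''}(\{(\omega,y),(\omega',z)\})<u_{v,\omega''}(\{(\omega,y),(\omega',z)\})$, then there exists $P\in p_R(T)$ with $P_{v,\omega}=y$ and $P_{v,\omega'}=z$.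
   Context: An influence graph is $G=(V,I)$, $V=\{1,\dots,n\}$, $I\subseteq V\times V$; regulators $n^-(v)=\{u\mid(u,v)\in I\}$. $m\in\mathbb N^n$, $D_v=\{0,\dots,m_v\}$, PRN $G_m=(G,m)$. Regulator states $\Omega_v=\prod_{u\in n^-(v)}D_u$; $\omega[u\leftarrow k]$ replaces component $u$ of $\omega$ by $k$. Parametrisations: vectors $P\in\mathbb P(G_m)$ with coordinates $P_{v,\omega}\in D_v$ for $v\in V$, $\omega\in\Omega_v$, ordered componentwise. States $\prod_vD_v$; $\omega_v(x)$ projects a state $x$ onto the regulators of $v$. Transitions $\Delta(G_m)$: $x\xrightarrow{v,+}y$ ($y$ equals $x$ except $y_v=x_v+1\le m_v$) and $x\xrightarrow{v,-}y$ ($y_v=x_v-1\ge0$). $\mathcal P_{x\xrightarrow{v,+}y}=\{P\mid P_{v,\omega_v(x)}\ge x_v+1\}$, $\mathcal P_{x\xrightarrow{v,-}y}=\{P\mid P_{v,\omega_v(x)}\le x_v-1\}$; $p(\emptyset)=\mathbb P(G_m)$, $p(T)=\bigcap_{t\in T}\mathcal P_t$. $R\subseteq V\times V\times\{+1,-1,\mathrm o\}$ is well-formed if $u\in n^-(v)$ for all $(u,v,c)\in R$ and never both $(u,v,+1),(u,v,-1)\in R$. $\mathcal P_{(u,v,+1)}=\{P\mid\forall\omega\in\Omega_v\forall x_u\in\{1..m_u\}:P_{v,\omega[u\leftarrow x_u]}\ge P_{v,\omega[u\leftarrow x_u-1]}\}$, $\mathcal P_{(u,v,-1)}$ likewise with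 $\le$, $\mathcal P_{(u,v,\mathrm o)}=\{P\mid\exists\omega\in\Omega_v\exists x_u\in\{1..m_u\}:P_{v,\omega[u\leftarrow x_u]}\ne P_{v,\omega[u\leftarrow x_u-1]}\}$; $p_R(T)=p(T)\cap\bigcap_{r\in R}\mathcal P_r$. Order $\preceq_v$: $\omega\preceq_v\omega'$ iff for all $u\in n^-(v)$, $\omega_u\le\omega'_u$ if $(u,v,+1)\in R$, $\omega_u\ge\omega'_u$ if $(u,v,-1)\in R$, $\omega_u=\omega'_u$ otherwise; $\prec_v,\succ_v$ are the strict versions and their converses. *)

From mathcomp Require Import all_boot.
Set Implicit Arguments. Unset Strict Implicit. Unset Printing Implicit Defensive.

(* Vertices V = {1..n} are encoded as 'I_n.  The influence graph is a relation
   I : rel 'I_n, (u,v) \in I  <->  I u v.  Maximal levels m : 'I_n -> nat,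
   D_v = {0..m v}. *)

(* A regulator state omega \in Omega_v is encoded canonically as a finite
   function 'I_n -> nat which is 0 outside n^-(v) and bounded by m on n^-(v). *)
Definition vec n := {ffun 'I_n -> nat}.

Definition in_Omega n (I : rel 'I_n) (m : 'I_n -> nat) (v : 'I_n) (w : vec n) :=
  forall u, (I u v -> w u <= m u) /\ (~~ I u v -> w u = 0).

Definition upd n (w : vec n) (u : 'I_n) (k : nat) : vec n :=
  [ffun x => if x == u then k else w x].

Definition is_state n (m : 'I_n -> nat) (x : vec n) := forall u, x u <= m u.

Definition proj n (I : rel 'I_n) (v : 'I_n) (x : vec n) : vec n :=
  [ffun u => if I u v then x u else 0].

(* Parametrisations: P v omega = P_{v,omega} (only values on Omega_v matter). *)
Definition param n := 'I_n -> vec n -> nat.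

Definition in_PG n (I : rel 'I_n) (m : 'I_n -> nat) (P : param n) :=
  forall v w, in_Omega I m v w -> P v w <= m v.

(* Transitions: (x, v, true) is x -(v,+)-> y, (x, v, false) is x -(v,-)-> y. *)
Definition trans n := (vec n * 'I_n * bool)%type.

Definition in_Delta n (m : 'I_n -> nat) (t : trans n) :=
  let: (x, v, b) := t in
  is_state m x /\ (if b then x v + 1 <= m v else 1 <= x v).

Definition in_Ptrans n (I : rel 'I_n) (P : param n) (t : trans n) :=
  let: (x, v, b) := t in
  if b then x v + 1 <= P v (proj I v x) else P v (proj I v x) + 1 <= x v.

Inductive sign := Pos | Neg | Obs.

Definition well_formed n (I : rel 'I_n) (R : pred ('I_n * 'I_n * sign)) :=
  (forall u v c, R (u, v, c) -> I u v) /\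
  (forall u v, ~ (R (u, v, Pos) /\ R (u, v, Neg))).

Definition in_Pconstr n (I : rel 'I_n) (m : 'I_n -> nat) (P : param n)
    (r : 'I_n * 'I_n * sign) :=
  let: (u, v, c) := r in
  match c with
  | Pos => forall w, in_Omega I m v w -> forall k, 1 <= k <= m u ->
             P v (upd w u k) >= P v (upd w u k.-1)
  | Neg => forall w, in_Omega I m v w -> forall k, 1 <= k <= m u ->
             P v (upd w u k) <= P v (upd w u k.-1)
  | Obs => exists w, in_Omega I m v w /\ exists k, 1 <= k <= m u /\
             P v (upd w u k) <> P v (upd w u k.-1)
  end.

Definition in_pR n (I : rel 'I_n) (m : 'I_n -> nat) (R : pred ('I_n * 'I_n * sign))
    (T : trans n -> Prop) (P : param n) :=
  in_PG I m P /\ (forall t, T t -> in_Ptrans I P t) /\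
  (forall r, R r -> in_Pconstr I m P r).

Definition is_cw_min n (I : rel 'I_n) (m : 'I_n -> nat) (S : param n -> Prop)
    (L : param n) :=
  forall v w, in_Omega I m v w ->
    (forall P, S P -> L v w <= P v w) /\ (exists P, S P /\ P v w = L v w).

Definition is_cw_max n (I : rel 'I_n) (m : 'I_n -> nat) (S : param n -> Prop)
    (U : param n) :=
  forall v w, in_Omega I m v w ->
    (forall P, S P -> P v w <= U v w) /\ (exists P, S P /\ P v w = U v w).

Definition preceq n (I : rel 'I_n) (R : pred ('I_n * 'I_n * sign)) (v : 'I_n)
    (w w' : vec n) : bool :=
  [forall u : 'I_n, I u v ==>
     (if R (u, v, Pos) then w u <= w' u
      else if R (u, v, Neg) then w' u <= w u
      else w u == w' u)].

Definition prec n (I : rel 'I_n) (R : pred ('I_n * 'I_n * sign)) (v : 'I_n)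
    (w w' : vec n) : bool :=
  preceq I R v w w' && (w != w').

(* l_{v,omega}(O) and u_{v,omega}(O), for a finite set O given as a list *)
Definition lo n (I : rel 'I_n) (R : pred ('I_n * 'I_n * sign)) (L : param n)
    (v : 'I_n) (w : vec n) (O : seq (vec n * nat)) : nat :=
  foldr (fun p acc => if prec I R v p.1 w then maxn p.2 acc else acc) (L v w) O.

Definition up n (I : rel 'I_n) (R : pred ('I_n * 'I_n * sign)) (U : param n)
    (v : 'I_n) (w : vec n) (O : seq (vec n * nat)) : nat :=
  foldr (fun p acc => if prec I R v w p.1 then minn p.2 acc else acc) (U v w) O.

(* Fix some P0 in p_R(T) and change only its row at v.  With a = l_{v,w''},
   the new row takes a value e in {a, a+1} at w'' and, at every other point o,
   the least value forced at o by L and by the prescribed values y at w, z at w'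
   and a+1 at w'', propagated upwards along the order of v, capped by U.  This
   row lies between L and U, hence satisfies every transition constraint, and
   it is monotone wherever L and U are, hence satisfies the sign constraints.
   The two choices of e give parametrisations that differ only at w''.  If both
   violated an observability constraint, their rows would be invariant along
   some regulators u and u'; chaining these invariances through points where
   the two rows agree would give a = a+1. *)

From mathcomp Require Import all_boot zify.
From Stdlib Require Import Classical.
Set Implicit Arguments. Unset Strict Implicit. Unset Printing Implicit Defensive.

Lemma leq_if_implied (b c : bool) k :
  (b -> c) -> (if b then k else 0) <= (if c then k else 0).
Proof. by case: b; case: c => // /(_ isT). Qed.

Section Regulators.
Variables (n : nat) (I : rel 'I_n) (m : 'I_n -> nat) (R : pred ('I_n * 'I_n * sign)).

Lemma upd_at (w : vec n) u k : upd w u k u = k.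
Proof. by rewrite /upd ffunE eqxx. Qed.

Lemma upd_id (w : vec n) u : upd w u (w u) = w.
Proof. by apply/ffunP => x; rewrite /upd ffunE; case: eqP => [->|]. Qed.

Lemma upd_comm (w : vec n) u u' k k' :
  (u = u' -> k = k') -> upd (upd w u k) u' k' = upd (upd w u' k') u k.
Proof.
move=> same; apply/ffunP => x; rewrite /upd !ffunE.
by case: (eqVneq x u) => [->|//]; case: (eqVneq u u') => // /same ->.
Qed.

Lemma upd_neq (w w0 : vec n) u k : k != w0 u -> upd w u k != w0.
Proof. by apply: contra_neq => <-; rewrite upd_at. Qed.

Lemma upd_Omega v (w : vec n) u k :
  in_Omega I m v w -> I u v -> k <= m u -> in_Omega I m v (upd w u k).
Proof.
move=> Ow Iu km x; rewrite /upd ffunE; case: eqP => [->|_]; last exact: Ow.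
by split=> //; rewrite Iu.
Qed.

Lemma proj_Omega v (x : vec n) : is_state m x -> in_Omega I m v (proj I v x).
Proof. by move=> Sx u; rewrite /proj ffunE; case: (I u v). Qed.

Section Preorder.
Variable v : 'I_n.

Lemma preceq_refl (w : vec n) : preceq I R v w w.
Proof. by apply/forallP => u; apply/implyP => _; do 2 case: ifP => _ //. Qed.

Lemma preceq_trans (a b c : vec n) :
  preceq I R v a b -> preceq I R v b c -> preceq I R v a c.
Proof.
move=> /forallP ab /forallP bc; apply/forallP => u; apply/implyP => Iu.
move: (implyP (ab u) Iu) (implyP (bc u) Iu).
case: ifP => _; first exact: leq_trans.
case: ifP => _; first by move=> h1 h2; exact: leq_trans h2 h1.
by move=> /eqP -> /eqP ->.
Qed.

Lemma preceq_anti (a b : vec n) :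
  in_Omega I m v a -> in_Omega I m v b ->
  preceq I R v a b -> preceq I R v b a -> a = b.
Proof.
move=> Oa Ob /forallP ab /forallP ba; apply/ffunP => u.
case Iu: (I u v); last by rewrite (proj2 (Oa u)) ?(proj2 (Ob u)) ?Iu.
move: (implyP (ab u) Iu) (implyP (ba u) Iu).
by do 2 (case: ifP => _; first by move=> h1 h2; apply/eqP; rewrite eqn_leq h1 h2);
   move=> /eqP.
Qed.

Lemma prec_irr (w : vec n) : prec I R v w w = false.
Proof. by rewrite /prec eqxx andbF. Qed.

Lemma prec_preceq_trans (a b c : vec n) :
  in_Omega I m v a -> in_Omega I m v b ->
  prec I R v a b -> preceq I R v b c -> prec I R v a c.
Proof.
move=> Oa Ob /andP[ab nab] bc; rewrite /prec (preceq_trans ab bc).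
by apply: contra_neq nab => ac; apply: preceq_anti => //; rewrite ac.
Qed.

Lemma preceq_upd_Pos (w : vec n) u i j :
  R (u, v, Pos) -> i <= j -> preceq I R v (upd w u i) (upd w u j).
Proof.
move=> Ru ij; apply/forallP => x; apply/implyP => _; rewrite /upd !ffunE.
by case: (eqVneq x u) => [->|_]; [rewrite Ru | do 2 case: ifP => _ //].
Qed.

Lemma preceq_upd_Neg (w : vec n) u i j :
  well_formed I R -> R (u, v, Neg) -> j <= i ->
  preceq I R v (upd w u i) (upd w u j).
Proof.
move=> [_ notboth] Ru ji; apply/forallP => x; apply/implyP => _; rewrite /upd !ffunE.
case: (eqVneq x u) => [->|_]; last by do 2 case: ifP => _ //.
by case: ifP => [Rp|_]; [case: (notboth u v) | rewrite Ru].
Qed.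

End Preorder.

Lemma observable_level_pos (P : param n) u v :
  in_Pconstr I m P (u, v, Obs) -> 0 < m u.
Proof. by case=> _ [_ [k [/andP[k1 km] _]]]; apply: leq_trans km. Qed.

Lemma not_observable_upd (P : param n) u v :
  I u v -> ~ in_Pconstr I m P (u, v, Obs) ->
  forall w, in_Omega I m v w -> forall k, k <= m u -> P v (upd w u k) = P v w.
Proof.
move=> Iu nobs w Ow.
have step k : 1 <= k <= m u -> P v (upd w u k) = P v (upd w u k.-1).
  by move=> km; apply: NNPP => ne; apply: nobs; exists w; split=> //; exists k.
have to0 k : k <= m u -> P v (upd w u k) = P v (upd w u 0).
  by elim: k => // k IH km; rewrite step ?km //; exact: IH (ltnW km).
move=> k km; rewrite to0 //.
by rewrite -{2}(upd_id w u) to0 //; exact: (proj1 (Ow u) Iu).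
Qed.

Lemma observable_point_change (P P' : param n) v (w0 : vec n) u u' :
  in_Omega I m v w0 -> I u v -> I u' v -> 0 < m u -> 0 < m u' ->
  P v w0 != P' v w0 -> (forall w, w != w0 -> P v w = P' v w) ->
  in_Pconstr I m P (u, v, Obs) \/ in_Pconstr I m P' (u', v, Obs).
Proof.
move=> O0 Iu Iu' mu mu' ne agree.
case: (classic (in_Pconstr I m P (u, v, Obs))) => [|nP]; [by left | right].
apply: NNPP => nP'; move/eqP: ne; apply.
pose j x := if w0 x == 0 then 1 else 0.
have j_le x : 0 < m x -> j x <= m x by rewrite /j; case: eqP.
have j_neq x : j x != w0 x.
  by rewrite /j; case: (eqVneq (w0 x) 0) => [->|]; rewrite // eq_sym.
have invP := not_observable_upd Iu nP.
have invP' := not_observable_upd Iu' nP'.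
have Or := upd_Omega O0 Iu (j_le u mu).
have Os := upd_Omega O0 Iu' (j_le u' mu').
have swap : upd (upd w0 u' (j u')) u (j u) = upd (upd w0 u (j u)) u' (j u').
  by apply: upd_comm => ->.
(* P w0 = P r = P' r = P' rs = P rs = P s = P' s = P' w0, where r, s and rs
   are w0 with its u-, its u'- or both coordinates moved away from w0. *)
rewrite -(invP w0 O0 (j u)) ?j_le // agree ?upd_neq //.
rewrite -(invP' _ Or (j u')) ?j_le // -agree ?upd_neq //.
rewrite -swap invP ?j_le // agree ?upd_neq //.
by rewrite invP' ?j_le.
Qed.

Lemma in_pR_update (T : trans n -> Prop) (P Q : param n) v :
  in_pR I m R T P -> (forall v', v' != v -> Q v' = P v') ->
  (forall w, in_Omega I m v w -> Q v w <= m v) ->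
  (forall x b, T (x, v, b) -> in_Ptrans I Q (x, v, b)) ->
  (forall u c, R (u, v, c) -> in_Pconstr I m Q (u, v, c)) ->
  in_pR I m R T Q.
Proof.
move=> [PG [PT PR]] QP Qm QT QR; split; [|split].
- move=> v' w; case: (eqVneq v' v) => [->|ne]; first exact: Qm.
  by rewrite QP //; exact: PG.
- move=> [[x v'] b] Tt; case: (eqVneq v' v) => [ev|ne]; first by subst; exact: QT.
  by have := PT _ Tt; rewrite /in_Ptrans QP.
- move=> [[u v'] c] Rr; case: (eqVneq v' v) => [ev|ne]; first by subst; exact: QR.
  by have := PR _ Rr; rewrite /in_Pconstr QP.
Qed.

Section Thresholds.
Variables (L U : param n) (v : 'I_n) (w : vec n).

Lemma lo_ge_base O : L v w <= lo I R L v w O.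
Proof. by elim: O => //= p O IH; case: ifP => // _; rewrite leq_max IH orbT. Qed.

Lemma lo_ge_mem O w1 k : (w1, k) \in O -> prec I R v w1 w -> k <= lo I R L v w O.
Proof.
elim: O => //= p O IH; rewrite in_cons => /orP[/eqP <- /= -> | /IH le_k Rw1].
  exact: leq_maxl.
by case: ifP => _; rewrite ?leq_max le_k ?orbT.
Qed.

Lemma up_le_base O : up I R U v w O <= U v w.
Proof. by elim: O => //= p O IH; case: ifP => // _; rewrite geq_min IH orbT. Qed.

Lemma up_le_mem O w1 k : (w1, k) \in O -> prec I R v w w1 -> up I R U v w O <= k.
Proof.
elim: O => //= p O IH; rewrite in_cons => /orP[/eqP <- /= -> | /IH le_k Rw1].
  exact: geq_minl.
by case: ifP => _; rewrite ?geq_min le_k ?orbT.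
Qed.

End Thresholds.

Section ComponentwiseBounds.
Variables (T : trans n -> Prop) (L U : param n).
Hypotheses (T_Delta : forall t, T t -> in_Delta m t)
  (L_min : is_cw_min I m (in_pR I m R T) L)
  (U_max : is_cw_max I m (in_pR I m R T) U).

Lemma cw_min_le_max v w : in_Omega I m v w -> L v w <= U v w.
Proof. by move=> Ow; have [_ [P [SP <-]]] := L_min Ow; exact: (proj1 (U_max Ow)). Qed.

Lemma cw_max_le_level v w : in_Omega I m v w -> U v w <= m v.
Proof. by move=> Ow; have [_ [P [SP <-]]] := U_max Ow; exact: (proj1 SP). Qed.

Lemma cw_min_homo v w1 w2 :
  in_Omega I m v w1 -> in_Omega I m v w2 ->
  (forall P, in_pR I m R T P -> P v w1 <= P v w2) -> L v w1 <= L v w2.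
Proof.
move=> O1 O2 homo; have [_ [P [SP <-]]] := L_min O2.
exact: leq_trans (proj1 (L_min O1) _ SP) (homo _ SP).
Qed.

Lemma cw_max_homo v w1 w2 :
  in_Omega I m v w1 -> in_Omega I m v w2 ->
  (forall P, in_pR I m R T P -> P v w1 <= P v w2) -> U v w1 <= U v w2.
Proof.
move=> O1 O2 homo; have [_ [P [SP <-]]] := U_max O1.
exact: leq_trans (homo _ SP) (proj1 (U_max O2) _ SP).
Qed.

Lemma in_Ptrans_between (Q : param n) x v b :
  T (x, v, b) -> L v (proj I v x) <= Q v (proj I v x) <= U v (proj I v x) ->
  in_Ptrans I Q (x, v, b).
Proof.
move=> Tt /andP[LQ QU]; have Ox := proj_Omega v (proj1 (T_Delta Tt)).
case: b Tt => Tt /=.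
  have [_ [P [[_ [PT _]] PL]]] := L_min Ox.
  by apply: leq_trans LQ; move: (PT _ Tt); rewrite /= PL.
have [_ [P [[_ [PT _]] PU]]] := U_max Ox.
by apply: leq_trans (PT _ Tt); rewrite /= PU leq_add2r.
Qed.

Section Witness.
Hypothesis WF : well_formed I R.
Variable P0 : param n.
Hypothesis P0_pR : in_pR I m R T P0.
Variables (v : 'I_n) (w w' w'' : vec n) (y z : nat).
Hypothesis Ow'' : in_Omega I m v w''.
Hypotheses (w_neq_w' : w != w') (w''_neq_w : w'' != w) (w''_neq_w' : w'' != w').
Hypotheses (y_between : L v w <= y <= U v w)
  (z_between : lo I R L v w' [:: (w, y)] <= z <= up I R U v w' [:: (w, y)]).
Let O := [:: (w, y); (w', z)].
Let a := lo I R L v w'' O.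
Hypothesis a_lt_up : a < up I R U v w'' O.

Let w_in_O : (w, y) \in O. Proof. exact: mem_head. Qed.
Let w'_in_O : (w', z) \in O. Proof. by rewrite !inE eqxx orbT. Qed.
Let L_le_a : L v w'' <= a. Proof. exact: lo_ge_base. Qed.
Let a_lt_U : a < U v w''. Proof. exact: leq_trans a_lt_up (up_le_base _ _ _ _). Qed.

Definition base (o : vec n) :=
  maxn (L v o) (maxn (if preceq I R v w o then y else 0)
    (maxn (if preceq I R v w' o then z else 0)
          (if prec I R v w'' o then a.+1 else 0))).

Lemma base_homo o1 o2 :
  in_Omega I m v o1 -> preceq I R v o1 o2 -> L v o1 <= L v o2 -> base o1 <= base o2.
Proof.
move=> O1 le12 L12.
have := leq_if_implied y (fun h : preceq I R v w o1 => preceq_trans h le12).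
have := leq_if_implied z (fun h : preceq I R v w' o1 => preceq_trans h le12).
have := leq_if_implied a.+1 (fun h => prec_preceq_trans Ow'' O1 h le12).
rewrite /base; lia.
Qed.

Lemma base_w : base w = y.
Proof.
have zy : (if preceq I R v w' w then z else 0) <= y.
  case: ifP => // le; apply: leq_trans (proj2 (andP z_between)) _.
  by apply: up_le_mem (mem_head _ _) _; rewrite /prec le eq_sym w_neq_w'.
have ay : (if prec I R v w'' w then a.+1 else 0) <= y.
  case: ifP => // lt; apply: leq_trans a_lt_up _.
  exact: up_le_mem w_in_O lt.
rewrite /base preceq_refl; lia.
Qed.

Lemma base_w' : base w' = z.
Proof.
have [lz _] := andP z_between.
have Lz := leq_trans (lo_ge_base _ _ _ _) lz.
have yz : (if preceq I R v w w' then y else 0) <= z.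
  case: ifP => // le; apply: leq_trans _ lz.
  by apply: lo_ge_mem (mem_head _ _) _; rewrite /prec le w_neq_w'.
have az : (if prec I R v w'' w' then a.+1 else 0) <= z.
  case: ifP => // lt; apply: leq_trans a_lt_up _.
  exact: up_le_mem w'_in_O lt.
rewrite /base preceq_refl; lia.
Qed.

Lemma base_w''_le : base w'' <= a.
Proof.
have ya : (if preceq I R v w w'' then y else 0) <= a.
  case: ifP => // le; apply: lo_ge_mem w_in_O _.
  by rewrite /prec le eq_sym w''_neq_w.
have za : (if preceq I R v w' w'' then z else 0) <= a.
  case: ifP => // le; apply: lo_ge_mem w'_in_O _.
  by rewrite /prec le eq_sym w''_neq_w'.
rewrite /base prec_irr; lia.
Qed.

Definition vrow (e : nat) (o : vec n) :=
  if o == w'' then e else minn (U v o) (base o).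

Lemma vrow_between e o :
  a <= e <= a.+1 -> in_Omega I m v o -> L v o <= vrow e o <= U v o.
Proof.
move=> ae Oo; rewrite /vrow; case: eqP => [->|_]; first lia.
have := cw_min_le_max Oo; have : L v o <= base o by exact: leq_maxl.
lia.
Qed.

Lemma vrow_homo e o1 o2 :
  a <= e <= a.+1 -> in_Omega I m v o1 -> in_Omega I m v o2 ->
  preceq I R v o1 o2 -> (forall P, in_pR I m R T P -> P v o1 <= P v o2) ->
  vrow e o1 <= vrow e o2.
Proof.
move=> ae O1 O2 le12 homo.
have U12 := cw_max_homo O1 O2 homo.
have B12 := base_homo O1 le12 (cw_min_homo O1 O2 homo).
rewrite /vrow; case: (eqVneq o1 w'') le12 U12 B12 => [->|n1] le12 U12 B12.
  case: (eqVneq o2 w'') => [//|n2].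
  have : prec I R v w'' o2 by rewrite /prec le12 eq_sym.
  by rewrite /base => ->; lia.
case: (eqVneq o2 w'') B12 => [->|_] B12; last lia.
have := base_w''_le; lia.
Qed.

Definition witness (e : nat) : param n :=
  fun v' => if v' == v then vrow e else P0 v'.

Lemma witness_v e : witness e v = vrow e.
Proof. by rewrite /witness eqxx. Qed.

Lemma witness_in_pR e :
  a <= e <= a.+1 ->
  (forall u, R (u, v, Obs) -> in_Pconstr I m (witness e) (u, v, Obs)) ->
  in_pR I m R T (witness e).
Proof.
move=> ae obs; apply: (in_pR_update (v := v) P0_pR).
- by move=> v' ne; rewrite /witness (negbTE ne).
- move=> o Oo; rewrite witness_v; case/andP: (vrow_between ae Oo) => _ QU.
  exact: leq_trans QU (cw_max_le_level Oo).
- move=> x b Tt; apply: in_Ptrans_between => //; rewrite witness_v.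
  exact/vrow_between/proj_Omega/(proj1 (T_Delta Tt)).
- move=> u [] Ru /=; last exact: obs.
  all: move=> o Oo k /andP[k1 km]; rewrite witness_v; have Iu := proj1 WF _ _ _ Ru.
  all: have Ok := upd_Omega Oo Iu km.
  all: have Ok1 := upd_Omega Oo Iu (leq_trans (leq_pred k) km).
  all: apply: vrow_homo => //.
  + exact: preceq_upd_Pos (leq_pred k).
  + by move=> P [_ [_ /(_ _ Ru) /= PR]]; apply: PR; rewrite ?k1.
  + exact: preceq_upd_Neg (leq_pred k).
  + by move=> P [_ [_ /(_ _ Ru) /= PR]]; apply: PR; rewrite ?k1.
Qed.

Lemma witness_observable :
  (forall u, R (u, v, Obs) -> in_Pconstr I m (witness a) (u, v, Obs)) \/
  (forall u, R (u, v, Obs) -> in_Pconstr I m (witness a.+1) (u, v, Obs)).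
Proof.
have [|/not_all_ex_not [u not_obs]] :=
  classic (forall u, R (u, v, Obs) -> in_Pconstr I m (witness a) (u, v, Obs)).
  by left.
have [Ru nobs] := imply_to_and _ _ not_obs; right => u' Ru'.
have [/nobs []|//] :
    in_Pconstr I m (witness a) (u, v, Obs) \/ in_Pconstr I m (witness a.+1) (u', v, Obs).
apply: (observable_point_change Ow'' (proj1 WF _ _ _ Ru) (proj1 WF _ _ _ Ru')).
- exact: observable_level_pos (proj2 (proj2 P0_pR) _ Ru).
- exact: observable_level_pos (proj2 (proj2 P0_pR) _ Ru').
- by rewrite !witness_v /vrow eqxx neq_ltn ltnSn.
- by move=> o no; rewrite !witness_v /vrow (negbTE no).
Qed.

Lemma exists_pR_through :
  exists P, [/\ in_pR I m R T P, P v w = y & P v w' = z].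
Proof.
have vrow_w e : vrow e w = y.
  rewrite /vrow eq_sym (negbTE w''_neq_w) base_w; apply/minn_idPr.
  by case/andP: y_between.
have vrow_w' e : vrow e w' = z.
  rewrite /vrow eq_sym (negbTE w''_neq_w') base_w'; apply/minn_idPr.
  exact: leq_trans (proj2 (andP z_between)) (up_le_base _ _ _ _).
have [obs|obs] := witness_observable;
  [exists (witness a) | exists (witness a.+1)];
  rewrite witness_v vrow_w vrow_w'; split=> //; apply: witness_in_pR obs.
all: by rewrite leqnn leqnSn.
Qed.

End Witness.

End ComponentwiseBounds.

End Regulators.

Theorem theorem3 (n : nat) (I : rel 'I_n) (m : 'I_n -> nat)
    (R : pred ('I_n * 'I_n * sign)) (T : trans n -> Prop) (L U : param n) :
  well_formed I R ->
  (forall t, T t -> in_Delta m t) ->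
  (exists P, in_pR I m R T P) ->
  is_cw_min I m (in_pR I m R T) L ->
  is_cw_max I m (in_pR I m R T) U ->
  forall (v : 'I_n) (w w' : vec n),
    in_Omega I m v w -> in_Omega I m v w' -> w != w' ->
  forall y, L v w <= y <= U v w ->
  forall z, lo I R L v w' [:: (w, y)] <= z <= up I R U v w' [:: (w, y)] ->
  (exists w'', [/\ in_Omega I m v w'', w'' != w, w'' != w' &
     lo I R L v w'' [:: (w, y); (w', z)] < up I R U v w'' [:: (w, y); (w', z)]]) ->
  exists P, [/\ in_pR I m R T P, P v w = y & P v w' = z].
Proof.
move=> WF T_Delta [P0 P0_pR] L_min U_max v w w' _ _ w_neq_w' y y_between
  z z_between [w'' [Ow'' w''_neq_w w''_neq_w' a_lt_up]].
exact: (exists_pR_through T_Delta L_min U_max WF P0_pR Ow''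
  w_neq_w' w''_neq_w w''_neq_w' y_between z_between a_lt_up).
Qed.
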